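(* In the contention game with $k=2$ channels and $n\ge2$ players, if all players use the protocol $f^2$ (in every slot, regardless of history, a pending player transmits on each of the two channels with probability $1/2$ and never stays idle), then the expected latency of any player is $2^n/n$.
   Context: Contention game: $n$ players, channels $K=\{1,\dots,k\}$, slots $t=1,2,\dots$; each player has one packet and is initially pending. In each slot a pending player chooses an action in $\{0,1,\dots,k\}$ ($0$ = idle, $a$ = transmit on channel $a$). A lone transmitter on a channel succeeds and leaves the game; two or more transmitters on the same channel collide and remain pending. The latency of a player is the slot in which she transmits successfully. *)

From mathcomp Require Import all_boot.
From Stdlib Require Import Reals.
Set Implicit Arguments. Unset Strict Implicit. Unset Printing Implicit Defensive.

(* Channels K = {1,2} are represented by 'I_2.  Under protocol f^2 every
   pending player, in every slot and independently of history, picks one of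
   the two channels uniformly at random (never idle).  A slot's random
   outcome is thus a profile assigning a channel to each player; since
   choices are i.i.d. uniform, profiles are uniform on {ffun 'I_n -> 'I_2}
   (choices of already-departed players are irrelevant). *)
Definition profile (n : nat) := {ffun 'I_n -> 'I_2}.

Definition lone n (P : {set 'I_n}) (c : profile n) (i : 'I_n) : bool :=
  (i \in P) && [forall j in P, (j != i) ==> (c j != c i)].

Definition step n (P : {set 'I_n}) (c : profile n) : {set 'I_n} :=
  [set j in P | ~~ lone P c j].

Definition pending n (s : seq (profile n)) : {set 'I_n} :=
  foldl (@step n) [set: 'I_n] s.

(* latency of player i equals t.+1, for an outcome w of the first t.+1 slots *)
Definition latency_is n (i : 'I_n) t (w : (t.+1).-tuple (profile n)) : bool :=
  lone (pending (take t w)) (tnth w ord_max) i.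

Definition prob_latency n (i : 'I_n) (t : nat) : R :=
  (INR #|[set w : (t.+1).-tuple (profile n) | latency_is i w]|
   / INR #|{: (t.+1).-tuple (profile n)}|)%R.

(* With m players pending, a given one of them transmits alone with probability
   2/2^m, whatever the history.  For m >= 3 at most one player can be alone on one
   of two channels, so a slot removes exactly one player or none; for m = 2 both
   players succeed or neither does.  Hence the probability g_m(t) that a fixed
   pending player succeeds exactly in slot t+1 depends only on m and satisfies
     g_m(t+1) = (1 - 2m/2^m) g_m(t) + (2(m-1)/2^m) g_(m-1)(t),   g_2(t+1) = g_2(t)/2.
   Summing these first-order linear recurrences and their first moments, by
   induction on m, gives total mass 1 and a mean E_m with
   (2m/2^m) E_m = 1 + (2(m-1)/2^m) E_(m-1), whence E_m = 2^m/m from E_2 = 2. *)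

From mathcomp Require Import all_boot zify.
From Stdlib Require Import Reals Lra.
From Coquelicot Require Import Coquelicot.
Set Implicit Arguments. Unset Strict Implicit. Unset Printing Implicit Defensive.

(* Coquelicot opens R_scope and Stdlib Reals rebinds [^] in nat_scope to Nat.pow. *)
Local Close Scope R_scope.
Local Notation "a ^ b" := (expn a b) : nat_scope.

Section SeriesAlgebra.
Local Open Scope R_scope.

Lemma is_series_R0 : is_series (fun _ : nat => 0) 0.
Proof.
apply: (filterlim_ext (fun _ => 0)) => [N|]; first by rewrite sum_n_const Rmult_0_r.
exact: filterlim_const.
Qed.

Lemma is_series_Rplus (a b : nat -> R) la lb :
  is_series a la -> is_series b lb -> is_series (fun t => a t + b t) (la + lb).
Proof. exact: is_series_plus. Qed.

Lemma is_series_Rscal (c : R) (a : nat -> R) l :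
  is_series a l -> is_series (fun t => c * a t) (c * l).
Proof. exact: is_series_scal. Qed.

End SeriesAlgebra.

Arguments is_series_Rscal c [a l].

Section LinearRecurrenceSeries.
Local Open Scope R_scope.

Variables (u v : nat -> R) (q V : R).
Hypotheses (u_ge0 : forall t, 0 <= u t) (v_ge0 : forall t, 0 <= v t).
Hypothesis q_lt1 : q < 1.
Hypothesis u_rec : forall t, u t.+1 = q * u t + v t.
Hypothesis v_sum : is_series v V.

Lemma sum_n_linear_rec N : sum_n u N.+1 = u 0%nat + q * sum_n u N + sum_n v N.
Proof.
elim: N => [|N IH]; first by rewrite sum_Sn !sum_O u_rec /plus /=; ring.
by rewrite sum_Sn {1}IH u_rec !sum_Sn /plus /=; ring.
Qed.

Lemma ex_series_linear_rec : ex_series u.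
Proof.
have v_le : forall N, sum_n v N <= V.
  apply: is_lim_seq_incr_compare v_sum _ => N.
  by rewrite sum_Sn /plus /=; have := v_ge0 N.+1; lra.
have u_incr : forall N, sum_n u N <= sum_n u N.+1.
  by move=> N; rewrite sum_Sn /plus /=; have := u_ge0 N.+1; lra.
have u_bnd : forall N, sum_n u N <= (u 0%nat + V) / (1 - q).
  move=> N; apply/Rle_div_r; first lra.
  have := u_incr N; rewrite sum_n_linear_rec; have := v_le N; nra.
have [l lim_u] := ex_finite_lim_seq_incr _ _ u_incr u_bnd.
by exists l.
Qed.

Lemma is_series_linear_rec : is_series u ((u 0%nat + V) / (1 - q)).
Proof.
have [l sum_u] : exists l : R, is_series u l := ex_series_linear_rec.
have E1 : is_series (fun t => u t.+1) (l - u 0%nat).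
  by apply: is_series_incr_1; rewrite /plus /= Rplus_comm Rplus_minus.
have E2 : is_series (fun t => u t.+1) (q * l + V).
  by apply: is_series_ext (is_series_Rplus (is_series_Rscal q sum_u) v_sum) => t; rewrite u_rec.
have := is_series_unique _ _ E1; rewrite (is_series_unique _ _ E2) => E.
suff -> : (u 0%nat + V) / (1 - q) = l by [].
field_simplify_eq; [nra | lra].
Qed.

End LinearRecurrenceSeries.

Section LinearRecurrenceMoment.
Local Open Scope R_scope.

(* (t+2) u_(t+1) = q (t+1) u_t + (q u_t + (t+1) v_t + v_t) is again a first-order linear recurrence. *)
Lemma is_series_moment_linear_rec (u v : nat -> R) (q U V V1 : R) :
  (forall t, 0 <= u t) -> (forall t, 0 <= v t) -> 0 <= q -> q < 1 ->
  (forall t, u t.+1 = q * u t + v t) ->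
  is_series u U -> is_series v V -> is_series (fun t => INR t.+1 * v t) V1 ->
  is_series (fun t => INR t.+1 * u t) ((u 0%nat + q * U + V1 + V) / (1 - q)).
Proof.
move=> u_ge0 v_ge0 q_ge0 q_lt1 u_rec sU sV sV1.
have w_ge0 t : 0 <= q * u t + INR t.+1 * v t + v t.
  have := u_ge0 t; have := v_ge0 t; have := pos_INR t.+1; nra.
have := is_series_linear_rec (u := fun t => INR t.+1 * u t) _ w_ge0 q_lt1 _
  (is_series_Rplus (is_series_Rplus (is_series_Rscal q sU) sV1) sV).
rewrite Rmult_1_l !Rplus_assoc; apply.
- by move=> t; apply: Rmult_le_pos; [apply: pos_INR | apply: u_ge0].
- by move=> t; rewrite u_rec S_INR; ring.
Qed.

End LinearRecurrenceMoment.

Lemma sum_nat_of_bool (T : finType) (P : pred T) :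
  \sum_(x : T) (P x : nat) = #|[set x | P x]|.
Proof. by rewrite -sum1dep_card [RHS]big_mkcond; apply: eq_bigr => x _; case: (P x). Qed.

Lemma big_tuple_cons (R : Type) (idx : R) (op : Monoid.com_law idx) (T : finType) t
    (F : t.+1.-tuple T -> R) :
  \big[op/idx]_(w : t.+1.-tuple T) F w
  = \big[op/idx]_(x : T) \big[op/idx]_(w : t.-tuple T) F [tuple of x :: w].
Proof.
rewrite pair_big (reindex (fun p : T * t.-tuple T => [tuple of p.1 :: p.2])) //=.
exists (fun w => (thead w, behead_tuple w)) => [[x w] _ | w _] /=.
  by congr pair; apply: val_inj.
by rewrite [in RHS](tuple_eta w); apply: val_inj.
Qed.

Lemma card_tuple_cons (T : finType) t (P : pred (t.+1.-tuple T)) :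
  #|[set w | P w]| = \sum_(x : T) #|[set w : t.-tuple T | P [tuple of x :: w]]|.
Proof.
by rewrite -sum_nat_of_bool big_tuple_cons; apply: eq_bigr => x _; rewrite sum_nat_of_bool.
Qed.

Lemma double_leq_exp2 m : 2 * m <= 2 ^ m.
Proof. by elim: m => // m IH; rewrite expnS; have := expn_gt0 2 m; lia. Qed.

Lemma leq_mul_exp2S m n : m <= n -> m * 2 ^ (n - m).+1 <= 2 ^ n.
Proof.
move=> mn; rewrite -{2}(subnKC mn) expnD expnS mulnCA mulnA.
by rewrite leq_mul2r double_leq_exp2 orbT.
Qed.

Section NatToReal.
Local Open Scope R_scope.

Lemma INR_addn a b : INR (a + b) = INR a + INR b.
Proof. by rewrite addnE plus_INR. Qed.

Lemma INR_muln a b : INR (a * b) = INR a * INR b.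
Proof. by rewrite mulnE mult_INR. Qed.

Lemma INR_subn a b : (b <= a)%nat -> INR (a - b) = INR a - INR b.
Proof. by move=> /leP ba; rewrite subnE minus_INR. Qed.

Lemma INR_expn a b : INR (a ^ b) = INR a ^ b.
Proof. by elim: b => [|b IH] //=; rewrite expnS INR_muln IH. Qed.

Lemma INR2 : INR 2 = 2.
Proof. by rewrite /=; ring. Qed.

Lemma INR_predn m : (0 < m)%nat -> INR m.-1 = INR m - 1.
Proof. by move=> m_gt0; rewrite -{2}(prednK m_gt0) S_INR; ring. Qed.

Lemma double_le_pow2 m : 2 * INR m <= 2 ^ m.
Proof. by rewrite -INR2 -INR_muln -INR_expn; apply/le_INR/leP/double_leq_exp2. Qed.

Lemma INR_sum_const (I : finType) (A : {pred I}) (F : I -> nat) x :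
  (forall j, j \in A -> INR (F j) = x) -> INR (\sum_(j in A) F j) = INR #|A| * x.
Proof.
move=> Fx; rewrite (big_morph INR INR_addn (erefl (INR 0))) (eq_bigr _ Fx) big_const.
by elim: #|A| => [|k IH]; rewrite ?iterS ?IH ?S_INR /=; ring.
Qed.

End NatToReal.

Section Profiles.
Variable n : nat.
Implicit Types (S : {set 'I_n}) (c : profile n).

Lemma card_profile : #|{: profile n}| = 2 ^ n.
Proof. by rewrite card_ffun !card_ord. Qed.

Lemma card_lone S j : j \in S -> #|[set c | lone S c j]| = 2 ^ (n - #|S|).+1.
Proof.
move=> jS.
pose F (b : 'I_2) x : pred 'I_2 :=
  if x == j then pred1 b else if x \in S then predC1 b else predT.
have loneE c : lone S c j = (c \in finfun.family (F (c j))).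
  rewrite /lone jS; apply/forallP/familyP => /= [lone_c x | fam_c x].
    rewrite /F; case: eqP => [-> | /eqP xj] /=; first exact: eqxx.
    by case: ifP => // xS; have := lone_c x; rewrite xS xj.
  apply/implyP => xS; apply/implyP => xj.
  by have := fam_c x; rewrite /F (negbTE xj) xS.
have card_F b : #|finfun.family (F b)| = 2 ^ (n - #|S|).
  rewrite card_family foldrE big_map big_enum /=.
  rewrite (eq_bigr (fun x => if x \in ~: S then 2 else 1)) => [|x _].
    by rewrite -big_mkcond prod_nat_const cardsCs setCK card_ord.
  rewrite inE /F; case: eqP => [-> | _]; first by rewrite jS card1.
  by case: (x \in S); rewrite /= ?cardC1 card_ord.
rewrite -sum1dep_card (partition_big (fun c => c j) predT) //=.
rewrite (eq_bigr (fun _ => 2 ^ (n - #|S|))) => [|b _].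
  by rewrite sum_nat_const card_ord expnS.
rewrite -(card_F b) -sum1_card; apply: eq_bigl => c.
rewrite loneE; apply/idP/idP => [/andP[fam_c /eqP <-] // | fam_c].
by have := familyP fam_c j; rewrite /F eqxx => /eqP ->; rewrite fam_c eqxx.
Qed.

Lemma ord2_neq_trans (x y z : 'I_2) : x != y -> y != z -> x = z.
Proof.
by case: x => [[|[|?]] ?]; case: y => [[|[|?]] ?]; case: z => [[|[|?]] ?] // _ _; apply: val_inj.
Qed.

Lemma lone_in S c j : lone S c j -> j \in S.
Proof. by case/andP. Qed.

Lemma lone_uniq S c j k : 3 <= #|S| -> lone S c j -> lone S c k -> j = k.
Proof.
move=> S3 /andP[jS /forallP lone_j] /andP[kS /forallP lone_k].
apply/eqP/negPn/negP => jk.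
have [l] : exists l, l \in (S :\ j) :\ k.
  apply/set0Pn; rewrite -card_gt0 -(ltn_add2l 2).
  by rewrite {1}(cardsD1 j S) (cardsD1 k (S :\ j)) jS !inE kS eq_sym jk in S3.
rewrite !inE => /and3P[lk lj lS].
have := lone_k l; rewrite lS lk => /eqP; apply.
apply: (@ord2_neq_trans _ (c j)); first by have := lone_j l; rewrite lS lj.
by have := lone_k j; rewrite jS jk.
Qed.

Lemma lone_pair c j k : j != k -> lone [set j; k] c j = (c k != c j).
Proof.
move=> jk; rewrite /lone !inE eqxx /=; apply/forallP/idP => [/(_ k) | ckj x].
  by rewrite !inE eqxx orbT eq_sym jk.
by rewrite !inE; apply/implyP => /orP[]/eqP ->; rewrite ?eqxx // ckj implybT.
Qed.

Lemma lone_card2 S c j k : #|S| = 2 -> j \in S -> k \in S -> lone S c j = lone S c k.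
Proof.
move=> S2 jS kS; have [-> // | jk] := eqVneq j k.
have -> : S = [set j; k].
  apply/esym/eqP; rewrite eqEcard subUset !sub1set jS kS cards2 jk S2 //.
by rewrite lone_pair // setUC lone_pair 1?eq_sym.
Qed.

Lemma step_lone S c j : 3 <= #|S| -> lone S c j -> step S c = S :\ j.
Proof.
move=> S3 lone_j; apply/setP => k; rewrite !inE andbC.
case: (eqVneq k j) => [-> | kj]; first by rewrite lone_j.
by apply: andb_idl => _; apply: contra_neqN kj => lone_k; apply: lone_uniq lone_j.
Qed.

Lemma step_no_lone S c : ~~ [exists j, lone S c j] -> step S c = S.
Proof.
move=> /existsPn no_lone; apply/setP => k.
by rewrite inE no_lone andbT.
Qed.

Lemma step_decomp S c (F : {set 'I_n} -> nat) : 3 <= #|S| ->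
  F (step S c) = ~~ [exists j, lone S c j] * F S + \sum_(j in S) lone S c j * F (S :\ j).
Proof.
move=> S3; case: (boolP [exists j, lone S c j]) => [/existsP[j lone_j] | no_lone].
  rewrite (step_lone S3 lone_j) (bigD1 j (lone_in lone_j)) big1 /= ?lone_j ?addn0 ?mul1n //.
  move=> k /andP[_ kj]; case: (boolP (lone S c k)) => //= lone_k.
  by rewrite (lone_uniq S3 lone_k lone_j) eqxx in kj.
rewrite step_no_lone // big1 ?addn0 ?mul1n // => j _.
by move/existsPn: no_lone => /(_ j)/negbTE ->.
Qed.

Lemma sum_step S (F : {set 'I_n} -> nat) : 3 <= #|S| ->
  \sum_c F (step S c) = (\sum_c ~~ [exists j, lone S c j]) * F S
                        + 2 ^ (n - #|S|).+1 * \sum_(j in S) F (S :\ j).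
Proof.
move=> S3; rewrite (eq_bigr _ (fun c _ => step_decomp c F S3)) big_split -big_distrl /=.
congr (_ + _); rewrite exchange_big big_distrr /=; apply: eq_bigr => j jS.
by rewrite -big_distrl /= sum_nat_of_bool card_lone.
Qed.

Lemma sum_no_lone S : 3 <= #|S| ->
  \sum_c ~~ [exists j, lone S c j] = 2 ^ n - #|S| * 2 ^ (n - #|S|).+1.
Proof.
move=> S3; have := sum_step (fun _ => 1) S3.
by rewrite !sum_nat_const card_profile !muln1 mulnC => ->; rewrite addnK.
Qed.

Lemma step_card2 S c i : #|S| = 2 -> i \in S -> step S c = if lone S c i then set0 else S.
Proof.
move=> S2 iS; apply/setP => k; rewrite inE.
case: (boolP (k \in S)) => kS; last by case: ifP; rewrite ?inE // (negbTE kS).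
by rewrite (lone_card2 _ S2 kS iS); case: ifP; rewrite ?inE.
Qed.

End Profiles.

Lemma foldl_step_sub n (S : {set 'I_n}) s : foldl (@step n) S s \subset S.
Proof.
elim: s S => [|c s IH] S /=; first exact: subxx.
by apply: subset_trans (IH _) _; apply/subsetP => x; rewrite inE => /andP[].
Qed.

Section Histories.
Variables (n : nat) (i : 'I_n).
Implicit Types (S : {set 'I_n}) (c : profile n).

Definition success_histories S t : nat :=
  #|[set w : t.+1.-tuple (profile n) | lone (foldl (@step n) S (take t w)) (tnth w ord_max) i]|.

Lemma success_histories0 S : success_histories S 0 = #|[set c | lone S c i]|.
Proof.
rewrite /success_histories card_tuple_cons -sum_nat_of_bool; apply: eq_bigr => c _.
transitivity #|[set w : 0.-tuple (profile n) | lone S c i]|.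
  by apply: eq_card => w; rewrite !inE (tnth_nth c).
by case: (lone S c i); rewrite ?cards0 // (cardsT (0.-tuple _)) card_tuple.
Qed.

Lemma success_historiesS S t :
  success_histories S t.+1 = \sum_c success_histories (step S c) t.
Proof.
rewrite /success_histories card_tuple_cons; apply: eq_bigr => c _.
by apply: eq_card => w; rewrite !inE (tnth_nth c) (tnth_nth c).
Qed.

Lemma success_histories_out S t : i \notin S -> success_histories S t = 0.
Proof.
move=> iS; apply/eqP; rewrite cards_eq0; apply/eqP/setP => w; rewrite !inE.
by apply: contraNF iS => /lone_in/(subsetP (foldl_step_sub _ _)).
Qed.

Lemma success_histories_card2 S t : #|S| = 2 -> i \in S ->
  success_histories S t.+1 = (2 ^ n - 2 ^ (n - 2).+1) * success_histories S t.
Proof.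
move=> S2 iS; rewrite success_historiesS.
rewrite (eq_bigr (fun c => ~~ lone S c i * success_histories S t)) => [|c _]; last first.
  rewrite (step_card2 _ S2 iS); case: (lone S c i); rewrite ?mul1n // mul0n.
  by rewrite success_histories_out ?inE.
rewrite -big_distrl /= sum_nat_of_bool; congr (_ * _).
have -> : [set c | ~~ lone S c i] = ~: [set c | lone S c i] by apply/setP => c; rewrite !inE.
by rewrite cardsCs setCK card_profile card_lone // S2.
Qed.

Lemma success_histories_card3 S t : 3 <= #|S| -> i \in S ->
  success_histories S t.+1 =
    (2 ^ n - #|S| * 2 ^ (n - #|S|).+1) * success_histories S t
    + 2 ^ (n - #|S|).+1 * \sum_(j in S :\ i) success_histories (S :\ j) t.
Proof.
move=> S3 iS; rewrite success_historiesS (sum_step (fun P => success_histories P t)) //.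
rewrite sum_no_lone // (big_setD1 i iS).
by rewrite /= [success_histories (S :\ i) t]success_histories_out // !inE eqxx.
Qed.

End Histories.

Section SuccessProbability.
Local Open Scope R_scope.

(* Only [2 <= m] is meaningful; the first branch is the case m = 2. *)
Fixpoint success_prob (m t : nat) : R :=
  if t is t.+1 then
    if (m <= 2)%nat then success_prob m t / 2
    else (1 - 2 * INR m / 2 ^ m) * success_prob m t
         + 2 * INR m.-1 / 2 ^ m * success_prob m.-1 t
  else 2 / 2 ^ m.

Lemma INR_success_histories n (i : 'I_n) t m (S : {set 'I_n}) :
  #|S| = m -> i \in S -> (2 <= m)%nat ->
  INR (success_histories i S t) = success_prob m t * (2 ^ n) ^ t.+1.
Proof.
have pow2_neq0 k : 2 ^ k <> 0 by apply: pow_nonzero; lra.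
elim: t m S => [|t IH] m S Sm iS m2.
all: have mn : (m <= n)%nat by rewrite -Sm -[n in (_ <= n)%nat]card_ord max_card.
all: have pow_split : 2 ^ n = 2 ^ m * 2 ^ (n - m) by rewrite -pow_add -addnE subnKC.
  rewrite success_histories0 card_lone // Sm INR_expn INR2 pow_split.
  rewrite [success_prob _ _]/= -tech_pow_Rmult pow_1.
  by field.
case: (ltnP 2 m) => [m3 | m2'].
  rewrite success_histories_card3 ?Sm // INR_addn !INR_muln INR_subn ?leq_mul_exp2S //.
  rewrite INR_muln (IH m S) //.
  rewrite (INR_sum_const (x := success_prob m.-1 t * (2 ^ n) ^ t.+1)); last first.
    move=> j; rewrite !inE => /andP[ji jS]; apply: IH; last by rewrite -ltnS prednK // ltnW.
      by move: (cardsD1 j S); rewrite jS Sm => ->.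
    by rewrite !inE eq_sym ji.
  have -> : #|S :\ i| = m.-1 by move: (cardsD1 i S); rewrite iS Sm => ->.
  rewrite [success_prob m t.+1]/= ifN -?ltnNge //.
  rewrite INR_predn 1?ltnW //.
  rewrite !INR_expn INR2 pow_split -!tech_pow_Rmult.
  by field.
have m2e : m = 2%nat by apply/eqP; rewrite eqn_leq m2' m2.
move: m2e Sm pow_split mn {m2 m2'} => -> Sm pow_split mn.
rewrite success_histories_card2 // INR_muln INR_subn; last first.
  by rewrite leq_pexp2l //; lia.
rewrite (IH 2%nat S) // [success_prob 2 t.+1]/= !INR_expn INR2 pow_split -!tech_pow_Rmult.
by field.
Qed.

Lemma pow2_gt0 k : 0 < 2 ^ k.
Proof. by apply: pow_lt; lra. Qed.

Lemma no_success_bounds m : (0 < m)%nat -> 0 <= 1 - 2 * INR m / 2 ^ m < 1.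
Proof.
move=> m_gt0; have p_gt0 := pow2_gt0 m; have m_pos := lt_0_INR _ (ltP m_gt0).
split; last by have := Rdiv_lt_0_compat (2 * INR m) _ ltac:(lra) p_gt0; lra.
by apply/Rge_le/Rge_minus/Rle_ge/Rle_div_l => //; have := double_le_pow2 m; lra.
Qed.

Lemma success_prob_ge0 m t : 0 <= success_prob m t.
Proof.
elim: t m => [|t IH] m /=.
  by apply: Rlt_le; apply: Rdiv_lt_0_compat; [lra | apply: pow2_gt0].
case: ifP => [_ | /negbT]; first by have := IH m; lra.
rewrite -ltnNge => m3; have [q_ge0 _] := no_success_bounds (ltnW (ltnW m3)).
have r_ge0 : 0 <= 2 * INR m.-1 / 2 ^ m.
  by apply: Rle_mult_inv_pos; [have := pos_INR m.-1; lra | apply: pow2_gt0].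
by apply: Rplus_le_le_0_compat; apply: Rmult_le_pos.
Qed.

Lemma success_prob2_series :
  is_series (success_prob 2) 1 /\
  is_series (fun t => INR t.+1 * success_prob 2 t) (2 ^ 2 / INR 2).
Proof.
have u_rec t : success_prob 2 t.+1 = / 2 * success_prob 2 t + 0 by rewrite /=; field.
have [half_ge0 half_lt1] : 0 <= / 2 < 1 by lra.
have u_ge0 := success_prob_ge0 2.
have sum_u := is_series_linear_rec u_ge0 (fun=> Rle_refl 0) half_lt1 u_rec is_series_R0.
have mom_0 : is_series (fun t => INR t.+1 * 0) 0.
  by apply: is_series_ext is_series_R0 => t; rewrite Rmult_0_r.
have mom_u := is_series_moment_linear_rec u_ge0 (fun=> Rle_refl 0) half_ge0 half_lt1 u_rec
  sum_u is_series_R0 mom_0.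
have sum1 : (success_prob 2 0 + 0) / (1 - / 2) = 1 by rewrite /=; field.
rewrite sum1 in sum_u mom_u; split => //.
suff <- : (success_prob 2 0 + / 2 * 1 + 0 + 0) / (1 - / 2) = 2 ^ 2 / INR 2 by [].
by rewrite /=; field.
Qed.

Lemma success_prob_seriesS m : (2 <= m)%nat ->
  is_series (success_prob m) 1 ->
  is_series (fun t => INR t.+1 * success_prob m t) (2 ^ m / INR m) ->
  is_series (success_prob m.+1) 1 /\
  is_series (fun t => INR t.+1 * success_prob m.+1 t) (2 ^ m.+1 / INR m.+1).
Proof.
move=> m2 sum_m mom_m; have u_ge0 := success_prob_ge0 m.+1.
have [q_ge0 q_lt1] := no_success_bounds (ltn0Sn m).
set q := 1 - _ in q_ge0 q_lt1.
set r := 2 * INR m / 2 ^ m.+1.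
have u_rec t : success_prob m.+1 t.+1 = q * success_prob m.+1 t + r * success_prob m t.
  by rewrite [success_prob m.+1 t.+1]/= ifN -?ltnNge.
have v_ge0 t : 0 <= r * success_prob m t.
  apply: Rmult_le_pos (success_prob_ge0 m t).
  by apply: Rle_mult_inv_pos; [have := pos_INR m; lra | apply: pow2_gt0].
have sum_v := is_series_Rscal r sum_m.
have mom_v : is_series (fun t => INR t.+1 * (r * success_prob m t)) (r * (2 ^ m / INR m)).
  apply: is_series_ext (is_series_Rscal r mom_m) => t.
  by rewrite Rmult_comm Rmult_assoc (Rmult_comm (success_prob m t)).
have sum_u := is_series_linear_rec u_ge0 v_ge0 q_lt1 u_rec sum_v.
have mom_u := is_series_moment_linear_rec u_ge0 v_ge0 q_ge0 q_lt1 u_rec sum_u sum_v mom_v.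
have m_neq0 : INR m <> 0 by apply: not_0_INR; lia.
have m1_neq0 : INR m + 1 <> 0 by have := pos_INR m; lra.
have := pow2_gt0 m => /Rgt_not_eq p_neq0.
have sum1 : (success_prob m.+1 0 + r * 1) / (1 - q) = 1.
  by rewrite /q /r [success_prob _ 0]/= S_INR -tech_pow_Rmult; field; split; lra.
rewrite sum1 in sum_u mom_u; split => //.
suff <- : (success_prob m.+1 0 + q * 1 + r * (2 ^ m / INR m) + r * 1) / (1 - q)
          = 2 ^ m.+1 / INR m.+1 by [].
by rewrite /q /r [success_prob _ 0]/= S_INR -tech_pow_Rmult; field; do !split.
Qed.

Lemma success_prob_series m : (2 <= m)%nat ->
  is_series (success_prob m) 1 /\
  is_series (fun t => INR t.+1 * success_prob m t) (2 ^ m / INR m).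
Proof.
elim: m => [|m IH] // m2; case: (ltnP 2 m.+1) => [m3 | m2'].
  by have [sum_m mom_m] := IH m3; apply: success_prob_seriesS.
have -> : m = 1%nat by apply/eqP; rewrite -eqSS eqn_leq m2 m2'.
exact: success_prob2_series.
Qed.

End SuccessProbability.

Lemma prob_latencyE n (i : 'I_n) t : (2 <= n)%N -> prob_latency i t = success_prob n t.
Proof.
move=> n2; rewrite /prob_latency.
change #|[set w : t.+1.-tuple (profile n) | latency_is i w]|
  with (success_histories i [set: 'I_n] t).
rewrite (@INR_success_histories n i t n) ?cardsT ?card_ord ?inE //.
rewrite card_tuple card_profile !INR_expn INR2.
by field; do 2!apply: pow_nonzero; lra.
Qed.

Theorem lemma3 (n : nat) (hn : (2 <= n)%N) (i : 'I_n) :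
  infinite_sum (fun t => prob_latency i t) 1%R /\
  infinite_sum (fun t => (INR t.+1 * prob_latency i t)%R) (2 ^ n / INR n)%R.
Proof.
have [sum_prob mean] := success_prob_series hn.
split; apply/is_series_Reals.
  by apply: is_series_ext sum_prob => t; rewrite prob_latencyE.
by apply: is_series_ext mean => t; rewrite prob_latencyE.
Qed.
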